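(* Let $\mathcal{I}\subseteq\mathcal{M}_m$ be decreasing, $r=\max_{u\in\mathcal{I}}\deg u$, and $f,g\in\mathcal{I}_r$ with $h=\gcd(f,g)$ and $\deg(h)\le r-2$. Then $$\Bigl|\mathrm{LTA}(m,2)_h\cdot h\cdot\Bigl(\mathrm{LTA}(m,2)_f\cdot\tfrac fh+\mathrm{LTA}(m,2)_g\cdot\tfrac gh\Bigr)\Bigr|=\bigl|\mathrm{LTA}(m,2)_h\cdot h\bigr|\cdot\Bigl|\mathrm{LTA}(m,2)_f\cdot\tfrac fh+\mathrm{LTA}(m,2)_g\cdot\tfrac gh\Bigr|.$$
   Context: $\mathcal{M}_m$: square-free monomials in $x_0,\dots,x_{m-1}$ in $\mathbf{R}_m=\mathbb{F}_2[x_0,\dots,x_{m-1}]/(x_i^2-x_i)$; $\operatorname{ind}(u)$ the variable indices, $\deg u=|\operatorname{ind}u|$, $\gcd$ has index set the intersection. For equal-degree monomials with increasing indices, $u\preceq_{sh}v$ iff componentwise $\le$; $u\preceq v$ iff $u\preceq_{sh}v^*\mid v$ for some $v^*$; $\mathcal{I}$ decreasing if $f\in\mathcal{I}$, $g\preceq f\Rightarrow g\in\mathcal{I}$; $\mathcal{I}_r$ its degree-$r$ elements. $\mathrm{LTA}(m,2)$: pairs $(\mathbf{B},\varepsilon)$, $\mathbf{B}=(b_{i,j})$ binary lower unitriangular, $\varepsilon\in\mathbb{F}_2^m$, acting on a monomial $u$ by $x_i\mapsto x_i+\sum_{j<i}b_{i,j}x_j+\varepsilon_i$ for $i\in\operatorname{ind}u$.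 $\mathrm{LTA}(m,2)_g$: subgroup with $\varepsilon_i=0$ for $i\notin\operatorname{ind}g$ and $b_{i,j}=0$ if $i\notin\operatorname{ind}g$ or $j\in\operatorname{ind}g$; for $u\mid g$, $\mathrm{LTA}(m,2)_g\cdot u=\{(\mathbf{B},\varepsilon)\cdot u:(\mathbf{B},\varepsilon)\in\mathrm{LTA}(m,2)_g\}$. For sets of polynomials $A+B=\{a+b\}$, $A\cdot B=\{ab\}$. *)

From mathcomp Require Import all_boot all_order all_algebra.
Set Implicit Arguments. Unset Strict Implicit. Unset Printing Implicit Defensive.

(* A square-free monomial of R_m is identified with its index set ind u.
   An element of R_m = F_2[x_0..x_{m-1}]/(x_i^2 - x_i) is identified with
   its (unique) expansion over square-free monomials, i.e. the set of
   monomials having coefficient 1. *)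
Definition mono (m : nat) := {set 'I_m}.
Definition poly (m : nat) := {set mono m}.

Section Ring.
Variable m : nat.

Definition mpoly (u : mono m) : poly m := [set u].
Definition pzero : poly m := set0.
Definition pone : poly m := [set set0].
Definition pvar (i : 'I_m) : poly m := [set [set i]].
Definition pcst (b : bool) : poly m := if b then pone else pzero.
Definition padd (p q : poly m) : poly m := (p :\: q) :|: (q :\: p).
(* multiplication in R_m : x_S * x_T = x_{S u T}, coefficients mod 2 *)
Definition pmul (p q : poly m) : poly m :=
  [set S | odd #|[set ab in setX p q | ab.1 :|: ab.2 == S]|].

Definition lta_t := ('M[bool]_m * {ffun 'I_m -> bool})%type.

Definition is_LTA (a : lta_t) : bool :=
  [forall i : 'I_m, forall j : 'I_m,
     ((i == j) ==> a.1 i j) && ((i < j) ==> ~~ a.1 i j)].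

Definition in_LTA_g (g : mono m) (a : lta_t) : bool :=
  [&& is_LTA a,
      [forall i : 'I_m, (i \notin g) ==> ~~ a.2 i] &
      [forall i : 'I_m, forall j : 'I_m,
         ((j < i) && ((i \notin g) || (j \in g))) ==> ~~ a.1 i j]].

Definition aff_img (a : lta_t) (i : 'I_m) : poly m :=
  padd (padd (pvar i)
             (\big[padd/pzero]_(j : 'I_m | (j < i) && a.1 i j) pvar j))
       (pcst (a.2 i)).

Definition lta_act (a : lta_t) (u : mono m) : poly m :=
  \big[pmul/pone]_(i <- enum u) aff_img a i.

Definition lta_orbit (g u : mono m) : {set poly m} :=
  [set lta_act a u | a in [set a : lta_t | in_LTA_g g a]].

Definition setadd (A B : {set poly m}) : {set poly m} :=
  [set padd a b | a in A, b in B].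
Definition setmul (A B : {set poly m}) : {set poly m} :=
  [set pmul a b | a in A, b in B].

Definition idx (u : mono m) : seq nat := sort leq [seq val i | i <- enum u].

Definition shle (u v : mono m) : bool :=
  (#|u| == #|v|) && all2 leq (idx u) (idx v).

Definition mle (u v : mono m) : bool :=
  [exists vs : mono m, (vs \subset v) && shle u vs].

Definition decreasing (I : {set mono m}) : Prop :=
  forall f g : mono m, f \in I -> mle g f -> g \in I.

End Ring.

From Pilot Require Import Defs.
From mathcomp Require Import all_boot all_order all_algebra zify.
Set Implicit Arguments. Unset Strict Implicit. Unset Printing Implicit Defensive.

(* Read elements of R_m as Boolean functions on F_2^m, which is faithful.
   An orbit element (B, eps) . u is then the indicator of a triangular locus
   {x | x_i = 1 + l_i(x) for i in ind u} with affine forms l_i, and for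
   (B, eps) in LTA(m,2)_g the l_i never read the coordinates of g.  Hence the
   factor a in LTA_h . h reads h while s = s_f + s_g with s_f in LTA_f . f/h,
   s_g in LTA_g . g/h does not, so a * s determines s: from any x with
   s(x) = 1 recompute the h-coordinates to land in the locus of a.  It also
   determines a: the forms l_i + l'_i (i in h) of two candidates vanish on the
   support of s, and an affine form vanishing on the support of s_f + s_g is
   zero once |f/h|, |g/h| >= 2, which is where deg h <= r - 2 is used. *)

Section SymmetricDifference.
Variable T : finType.
Implicit Types A B C : {set T}.

Definition setSD A B : {set T} := (A :\: B) :|: (B :\: A).

Lemma in_setSD A B x : (x \in setSD A B) = (x \in A) (+) (x \in B).
Proof. by rewrite !inE; case: (x \in A); case: (x \in B). Qed.

Lemma odd_card_setSD A B : odd #|setSD A B| = odd #|A| (+) odd #|B|.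
Proof.
have /eqP disjAB : (A :\: B) :&: (B :\: A) == set0.
  by apply/eqP/setP => x; rewrite !inE; case: (x \in A); case: (x \in B).
rewrite cardsU disjAB cards0 subn0 -(cardsID B A) -(cardsID A B) [B :&: A]setIC.
by rewrite !oddD; do 3 case: (odd _).
Qed.

Lemma odd_card_setISDr C A B :
  odd #|C :&: setSD A B| = odd #|C :&: A| (+) odd #|C :&: B|.
Proof.
suff -> : C :&: setSD A B = setSD (C :&: A) (C :&: B) by rewrite odd_card_setSD.
apply/setP => x; by rewrite !(inE, in_setSD); case: (x \in C); case: (x \in A); case: (x \in B).
Qed.

Lemma odd_card_setI1 C x : odd #|C :&: [set x]| = (x \in C).
Proof.
case: (boolP (x \in C)) => xC.
  have /setIidPr -> : [set x] \subset C by rewrite sub1set.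
  by rewrite cards1.
rewrite (_ : _ :&: _ = set0) ?cards0 //.
by apply/setP => y; rewrite !inE; case: (eqVneq y x) => [->|]; rewrite ?(negbTE xC) ?andbF.
Qed.

Lemma big_addb_odd (P : pred T) (F : T -> bool) :
  \big[addb/false]_(i | P i) F i = odd #|[set i | P i && F i]|.
Proof.
rewrite -sum1dep_card (big_morph odd oddD (erefl (odd 0))) [RHS]big_mkcondr /=.
by apply: eq_bigr => i _; case: (F i).
Qed.

End SymmetricDifference.

Section Evaluation.
Variable m : nat.
Implicit Types (p q : Defs.poly m) (x : {set 'I_m}).

(* The value of p at the point of F_2^m whose coordinates equal to 1 are those in x. *)
Definition peval p x : bool := odd #|[set u in p | u \subset x]|.

Lemma peval_add p q x : peval (padd p q) x = peval p x (+) peval q x.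
Proof.
rewrite /peval -odd_card_setSD.
suff -> : [set u in padd p q | u \subset x] =
  setSD [set u in p | u \subset x] [set u in q | u \subset x] by [].
apply/setP => u; by rewrite in_setSD !inE; case: (u \in p); case: (u \in q); case: (u \subset x).
Qed.

Lemma peval0 x : peval (pzero m) x = false.
Proof. by rewrite /peval (_ : [set u in _ | _] = set0) ?cards0 //; apply/setP => u; rewrite !inE. Qed.

Lemma peval1 x : peval (pone m) x = true.
Proof.
rewrite /peval (_ : [set u in pone m | _] = [set set0]) ?cards1 //.
by apply/setP => u; rewrite !inE; case: eqP => // ->; rewrite sub0set.
Qed.

Lemma peval_var i x : peval (pvar i) x = (i \in x).
Proof.
rewrite /peval (_ : [set u in _ | _] = if i \in x then [set [set i]] else set0).
  by case: (i \in x); rewrite ?(cards1 (_ : {set 'I_m})) ?cards0.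
apply/setP => u; case: (boolP (i \in x)) => ix; rewrite !inE;
  by case: (eqVneq u [set i]) => [->|] //=; rewrite sub1set ?(negbTE ix).
Qed.

Lemma peval_cst b x : peval (pcst m b) x = b.
Proof. by case: b; rewrite /pcst ?peval1 ?peval0. Qed.

Lemma peval_mul p q x : peval (pmul p q) x = peval p x && peval q x.
Proof.
pose N (S : {set 'I_m}) := #|[set ab in setX p q | ab.1 :|: ab.2 == S]|.
have -> : peval (pmul p q) x = odd (\sum_(u : {set 'I_m} | u \subset x) N u).
  rewrite /peval (big_morph odd oddD (erefl false : odd 0 = false)) big_addb_odd.
  by congr (odd _); apply: eq_card => u; rewrite !inE andbC.
have -> : \sum_(u : {set 'I_m} | u \subset x) N u = #|[set ab in setX p q | ab.1 :|: ab.2 \subset x]|.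
  rewrite -sum1_card (partition_big (fun ab => ab.1 :|: ab.2) (fun u => u \subset x)) /=;
    last by move=> ab; rewrite inE => /andP[].
  apply: eq_bigr => u ux; rewrite /N -sum1_card; apply: eq_bigl => ab.
  by rewrite !inE; case: eqP => [->|]; rewrite ?ux ?andbT ?andbF.
rewrite (_ : [set ab in _ | _] = setX [set u in p | u \subset x] [set u in q | u \subset x]).
  by rewrite cardsX oddM.
apply/setP => -[u v]; rewrite !inE /= subUset.
by case: (u \in p); case: (v \in q); case: (u \subset x); case: (v \subset x).
Qed.

(* A minimal monomial u of p is the only one below the point u. *)
Lemma peval_eq0 p : (forall x, peval p x = false) -> p = set0.
Proof.
move=> p0; apply/eqP; apply: contraT => /set0Pn[u0 pu0].
case: (arg_minnP (fun u : {set 'I_m} => #|u|) pu0) => u pu umin.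
have := p0 u; rewrite /peval (_ : [set v in p | v \subset u] = [set u]) ?cards1 //.
apply/setP => v; rewrite !inE; apply/andP/eqP => [[pv vu]|->]; last by split.
by apply/eqP; rewrite eqEcard vu umin.
Qed.

Lemma peval_inj p q : peval p =1 peval q -> p = q.
Proof.
move=> pq; have /peval_eq0/setP pq0 : forall x, peval (padd p q) x = false.
  by move=> x; rewrite peval_add pq addbb.
by apply/setP => u; have := pq0 u; rewrite !inE; case: (u \in p); case: (u \in q).
Qed.

End Evaluation.

Section AffineForms.
Variable m : nat.
Implicit Types (D V x y z : {set 'I_m}) (c : bool).

Definition aff D c x : bool := odd #|D :&: x| (+) c.

Lemma aff_setSD D c x y : aff D c (setSD x y) = aff D c x (+) odd #|D :&: y|.
Proof. by rewrite /aff odd_card_setISDr addbAC. Qed.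

Lemma aff_setSD3 D c x y z :
  aff D c (setSD (setSD x y) z) = aff D c x (+) aff D c y (+) aff D c z.
Proof. by rewrite !aff_setSD /aff; do 3 case: (odd _); case: c. Qed.

Lemma aff_setSDl D D' c c' x :
  aff (setSD D D') (c (+) c') x = aff D c x (+) aff D' c' x.
Proof.
rewrite /aff setIC odd_card_setISDr ![x :&: _]setIC.
by do 2 case: (odd _); case: c; case: c'.
Qed.

Lemma aff_eq_on V D c x y : D \subset V -> x :&: V = y :&: V -> aff D c x = aff D c y.
Proof. by move=> /setIidPl DV xy; rewrite /aff -DV -!setIA !(setIC V) xy. Qed.

Definition below (t : nat) : {set 'I_m} := [set j : 'I_m | j < t].

Lemma setSD1_below x (s : 'I_m) (t : nat) :
  t <= s -> setSD x [set s] :&: below t = x :&: below t.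
Proof.
move=> ts; apply/setP => k; rewrite !(inE, in_setSD).
case: (boolP (k < t)) => kt; rewrite ?andbF // !andbT.
suff -> : (k == s) = false by rewrite addbF.
by apply/negbTE; apply: contraTneq kt => ->; rewrite -leqNgt.
Qed.

End AffineForms.

Section TriangularAction.
Variable m : nat.
Implicit Types (a : lta_t m) (T V x y z : {set 'I_m}) (i k : 'I_m).

Definition lta_row a i : {set 'I_m} := [set j : 'I_m | (j < i) && a.1 i j].

Definition lta_lin a i : {set 'I_m} -> bool := aff (lta_row a i) (a.2 i).

Definition lta_sat a T x : bool := [forall i in T, (i \in x) (+) lta_lin a i x].

Lemma lta_row_below a i : lta_row a i \subset below m i.
Proof. by apply/subsetP => j; rewrite !inE => /andP[]. Qed.

Lemma peval_aff_img a i x : peval (aff_img a i) x = (i \in x) (+) lta_lin a i x.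
Proof.
rewrite /aff_img !peval_add peval_var peval_cst.
rewrite (big_morph (fun p => peval p x) (fun p q => peval_add p q x) (peval0 x)) big_addb_odd.
rewrite /lta_lin /aff -addbA; congr (_ (+) (odd _ (+) _)); apply: eq_card => j.
by rewrite !inE peval_var; case: (j < i); case: (a.1 i j).
Qed.

Lemma peval_lta_act a u x : peval (lta_act a u) x = lta_sat a u x.
Proof.
rewrite /lta_act (big_morph (fun p => peval p x) (fun p q => peval_mul p q x) (peval1 x)).
by rewrite big_enum big_andE; apply: eq_forallb => i; rewrite peval_aff_img.
Qed.

Lemma lta_sat_eq_on V a T x y :
    T \subset V -> {in T, forall i, lta_row a i \subset V} -> x :&: V = y :&: V ->
  lta_sat a T x = lta_sat a T y.
Proof.
move=> /subsetP TV rowsV xy; apply: eq_forallb_in => i iT.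
have /setP/(_ i) := xy; rewrite !inE TV // !andbT => ->.
by rewrite /lta_lin (aff_eq_on _ (rowsV i iT) xy).
Qed.

(* When no row indexed by T reads T, this is the unique point of the zero
   locus {lta_sat a T} that agrees with x off T. *)
Definition lta_fix a T x : {set 'I_m} :=
  [set i | if i \in T then ~~ lta_lin a i x else i \in x].

Lemma lta_fix_off a T x : lta_fix a T x :&: ~: T = x :&: ~: T.
Proof. by apply/setP => i; rewrite !inE; case: (i \in T); rewrite ?andbF. Qed.

Lemma lta_sat_fix a T x :
  {in T, forall i, lta_row a i \subset ~: T} -> lta_sat a T (lta_fix a T x).
Proof.
move=> rowsT; apply/forall_inP => i iT.
rewrite [in X in _ (+) X]/lta_lin (aff_eq_on _ (rowsT i iT) (lta_fix_off a T x)).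
by rewrite inE iT /lta_lin; case: (aff _ _ x).
Qed.

Lemma lta_fix_id a T x : lta_sat a T x -> lta_fix a T x = x.
Proof.
move/forall_inP => sat; apply/setP => i; rewrite inE.
case: (boolP (i \in T)) => // iT.
by move: (sat i iT); case: (i \in x); case: (lta_lin a i x).
Qed.

Lemma lta_fix_setSD3 a T x y z :
  lta_fix a T (setSD (setSD x y) z) =
  setSD (setSD (lta_fix a T x) (lta_fix a T y)) (lta_fix a T z).
Proof.
apply/setP => i; rewrite !(in_setSD, inE); case: (i \in T) => //.
by rewrite /lta_lin aff_setSD3; do 3 case: (aff _ _ _).
Qed.

Lemma lta_fix_setSD1 a T x k : k \notin T ->
  lta_fix a T (setSD x [set k]) =
  setSD (setSD (lta_fix a T x) [set k]) [set i in T | k \in lta_row a i].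
Proof.
move=> kT; apply/setP => i; rewrite !(in_setSD, inE).
case: (boolP (i \in T)) => iT /=; last by rewrite addbF.
have -> : (i == k) = false by apply: contraNF kT => /eqP <-.
by rewrite /lta_lin aff_setSD odd_card_setI1 inE; case: (aff _ _ x); case: (_ && _).
Qed.

Lemma lta_fix_below a T x y (t : nat) :
  x :&: below m t = y :&: below m t ->
  lta_fix a T x :&: below m t = lta_fix a T y :&: below m t.
Proof.
move=> xy; apply/setP => j; rewrite !inE.
case: (boolP (j < t)) => jt; rewrite ?andbF // !andbT.
case: (j \in T); last by move/setP: xy => /(_ j); rewrite !inE jt !andbT.
congr (~~ _); apply: aff_eq_on xy; apply: subset_trans (lta_row_below a j) _.
by apply/subsetP => k; rewrite !inE => /ltn_trans; apply.
Qed.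

End TriangularAction.

Lemma card_gt1_ord_lt n (A : {set 'I_n}) :
  1 < #|A| -> exists t1 t2 : 'I_n, [/\ t1 \in A, t2 \in A & t1 < t2].
Proof.
case/card_gt1P => x [y [xA yA xy]].
case: (ltngtP x y) => [lt|gt|/val_inj eq]; [by exists x, y | by exists y, x |].
by move: xy; rewrite eq eqxx.
Qed.

Section VanishingOnSum.
Variables (m : nat) (a1 a2 : lta_t m) (T1 T2 : {set 'I_m}).
Hypotheses (rows1 : {in T1, forall i, lta_row a1 i \subset ~: T1})
           (T12 : [disjoint T1 & T2]).
Implicit Types (D x z : {set 'I_m}) (c : bool).

(* For y in the first locus, toggling t1, t2 or both and then restoring the
   first locus yields, together with y, an affine plane (lta_fix is affine).
   The three new points leave the second locus, since toggling t does not move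
   the coordinates below t that the row of t reads; so the form vanishes there,
   hence also at y. *)
Lemma aff_vanish_sat D c (t1 t2 : 'I_m) : t1 \in T2 -> t2 \in T2 -> t1 < t2 ->
    (forall x, lta_sat a1 T1 x (+) lta_sat a2 T2 x -> aff D c x = false) ->
  forall x, aff D c (lta_fix a1 T1 x) = false.
Proof.
move=> t1T2 t2T2 lt12 vanish x.
have sat1 z : lta_sat a1 T1 (lta_fix a1 T1 z) by exact: lta_sat_fix.
set y := lta_fix a1 T1 x.
have fix_y : lta_fix a1 T1 y = y := lta_fix_id (sat1 x).
case sat2y : (lta_sat a2 T2 y); last by apply: vanish; rewrite sat1 sat2y.
have toggled t z : t \in T2 -> z :&: below m t = y :&: below m t ->
    (t \in z) = ~~ (t \in y) -> aff D c (lta_fix a1 T1 z) = false.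
  move=> tT2 zy tz; apply: vanish; rewrite sat1 /=.
  apply/negP => /forall_inP/(_ t tT2); rewrite inE (disjointFl T12 tT2) tz.
  rewrite /lta_lin (aff_eq_on _ (lta_row_below a2 t) (lta_fix_below a1 T1 zy)) fix_y.
  by move/forall_inP: sat2y => /(_ t tT2); rewrite /lta_lin; case: (t \in y); case: (aff _ _ y).
have in_toggle z (s : 'I_m) : (s \in setSD z [set s]) = ~~ (s \in z).
  by rewrite in_setSD inE eqxx addbT.
have t12 : (t1 == t2) = false by apply/negbTE; apply: contraTneq lt12 => ->; rewrite ltnn.
set z1 := setSD y [set t1]; set z2 := setSD y [set t2]; set z12 := setSD z1 [set t2].
have v1 : aff D c (lta_fix a1 T1 z1) = false.
  by apply: (toggled t1) => //; [apply: setSD1_below | apply: in_toggle].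
have v2 : aff D c (lta_fix a1 T1 z2) = false.
  by apply: (toggled t2) => //; [apply: setSD1_below | apply: in_toggle].
have v12 : aff D c (lta_fix a1 T1 z12) = false.
  apply: (toggled t1) => //.
    by rewrite setSD1_below ?(ltnW lt12) // setSD1_below.
  by rewrite in_setSD in_toggle in_set1 t12 addbF.
have plane : z12 = setSD (setSD z1 y) z2.
  apply/setP => k; rewrite !in_setSD.
  by case: (k \in y); case: (k \in [set t1]); case: (k \in [set t2]).
by move: v12; rewrite plane lta_fix_setSD3 fix_y aff_setSD3 v1 v2 addbF.
Qed.

End VanishingOnSum.

Lemma aff_lta_fix_toggle_max m (a : lta_t m) (T D x : {set 'I_m}) c (M : 'I_m) :
    M \in D -> M \notin T -> {in D :&: T, forall i : 'I_m, i <= M} ->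
  aff D c (lta_fix a T (setSD x [set M])) = ~~ aff D c (lta_fix a T x).
Proof.
move=> MD MT Mmax; rewrite lta_fix_setSD1 // !aff_setSD odd_card_setI1 MD.
rewrite (_ : D :&: _ = set0) ?cards0 ?addbF ?addbT //.
apply/setP => i; rewrite !inE; apply/negP => /and4P[iD iT Mi _].
by have := leq_trans Mi (Mmax i _); rewrite ltnn inE iD iT => /(_ isT).
Qed.

Lemma aff_vanish_on_sum m (a1 a2 : lta_t m) (T1 T2 D : {set 'I_m}) c :
    {in T1, forall i, lta_row a1 i \subset ~: T1} ->
    {in T2, forall i, lta_row a2 i \subset ~: T2} ->
    [disjoint T1 & T2] -> 1 < #|T1| -> 1 < #|T2| ->
    (forall x, lta_sat a1 T1 x (+) lta_sat a2 T2 x -> aff D c x = false) ->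
  forall x, aff D c x = false.
Proof.
move=> rows1 rows2 T12 /card_gt1_ord_lt[s1 [s2 [s1T1 s2T1 lt_s]]].
move=> /card_gt1_ord_lt[t1 [t2 [t1T2 t2T2 lt_t]]] vanish.
have v1 := aff_vanish_sat rows1 T12 t1T2 t2T2 lt_t vanish.
have v2 : forall x, aff D c (lta_fix a2 T2 x) = false.
  apply: (aff_vanish_sat rows2 _ s1T1 s2T1 lt_s) => [|x]; first by rewrite disjoint_sym.
  by rewrite addbC; apply: vanish.
have DT : D :&: (T1 :|: T2) = set0.
  apply/eqP; apply: contraT => /set0Pn[i0 i0D]; exfalso.
  case: (@arg_maxnP _ i0 (fun i => i \in D :&: (T1 :|: T2)) val i0D).
  move=> M /[!inE] /andP[MD MT] Mmax.
  have no_max (a : lta_t m) (T : {set 'I_m}) : M \notin T -> T \subset T1 :|: T2 ->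
      ~ forall x, aff D c (lta_fix a T x) = false.
    move=> MnT /subsetP TT vT.
    suff Mbound : {in D :&: T, forall i : 'I_m, i <= M}.
      by have := aff_lta_fix_toggle_max a set0 c MD MnT Mbound; rewrite !vT.
    by move=> i; rewrite inE => /andP[iD iT]; apply: Mmax; rewrite inE iD TT.
  case/orP: MT => MT.
    by apply: (no_max a2 T2 _ (subsetUr _ _) v2); rewrite (disjointFr T12 MT).
  by apply: (no_max a1 T1 _ (subsetUl _ _) v1); rewrite (disjointFl T12 MT).
have DT1 : D \subset ~: T1.
  apply/subsetP => i iD; rewrite inE; apply/negP => iT1.
  by move/setP: DT => /(_ i); rewrite !inE iD iT1.
by move=> x; rewrite -(v1 x) (aff_eq_on _ DT1 (esym (lta_fix_off a1 T1 x))).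
Qed.

Lemma lta_row_LTA_g m (g : {set 'I_m}) (a : lta_t m) i :
  in_LTA_g g a -> lta_row a i \subset ~: g.
Proof.
case/and3P => _ _ /forallP/(_ i)/forallP rows; apply/subsetP => j.
rewrite !inE => /andP[ji aij]; apply/negP => jg.
by move: (rows j); rewrite ji jg orbT aij.
Qed.

Lemma lta_row_LTA_sub m (g T : {set 'I_m}) (a : lta_t m) i :
  T \subset g -> in_LTA_g g a -> lta_row a i \subset ~: T.
Proof. by move=> Tg La; apply: subset_trans (lta_row_LTA_g i La) _; rewrite setCS. Qed.

Section ZeroLocusCancellation.
Variables (m : nat) (T : {set 'I_m}) (a a' : lta_t m).
Hypotheses (rows : {in T, forall i, lta_row a i \subset ~: T})
           (rows' : {in T, forall i, lta_row a' i \subset ~: T}).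
Implicit Types (sigma : {set 'I_m} -> bool).

Definition off_invariant sigma := forall x y, x :&: ~: T = y :&: ~: T -> sigma x = sigma y.

Lemma lta_sat_and_cancel sigma sigma' : off_invariant sigma -> off_invariant sigma' ->
    (forall x, lta_sat a T x && sigma x = lta_sat a' T x && sigma' x) ->
  forall x, sigma x -> sigma' x.
Proof.
move=> inv inv' E x sx; have zx := lta_fix_off a T x.
rewrite -(inv' _ _ zx); have := E (lta_fix a T x).
by rewrite lta_sat_fix // (inv _ _ zx) sx => /esym/andP[].
Qed.

Lemma lta_lin_eq_on_support sigma : off_invariant sigma ->
    (forall x, lta_sat a T x && sigma x = lta_sat a' T x && sigma x) ->
  forall i y, i \in T -> sigma y -> lta_lin a i y = lta_lin a' i y.
Proof.
move=> inv E i y iT sy; set z := lta_fix a T y; have zy := lta_fix_off a T y.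
have satz : lta_sat a T z by exact: lta_sat_fix.
have /andP[satz' _] : lta_sat a' T z && sigma z by rewrite -E satz (inv _ _ zy).
move/forall_inP: satz => /(_ i iT); move/forall_inP: satz' => /(_ i iT).
rewrite /lta_lin (aff_eq_on _ (rows iT) zy) (aff_eq_on _ (rows' iT) zy).
by case: (i \in z); case: (aff _ _ y); case: (aff _ _ y).
Qed.

End ZeroLocusCancellation.

Section OrbitProduct.
Variables (m : nat) (f g : {set 'I_m}).
Local Notation h := (f :&: g).

Definition orbit_sum (b1 b2 : lta_t m) : Defs.poly m :=
  padd (lta_act b1 (f :\: h)) (lta_act b2 (g :\: h)).

Lemma peval_orbit_sum b1 b2 : in_LTA_g f b1 -> in_LTA_g g b2 ->
  off_invariant h (peval (orbit_sum b1 b2)).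
Proof.
move=> Lb1 Lb2 x y xy; rewrite !peval_add !peval_lta_act.
congr (_ (+) _); apply: (lta_sat_eq_on _ _ xy); rewrite ?setDE ?subsetIr // => i _.
  exact: lta_row_LTA_sub (subsetIl f g) Lb1.
exact: lta_row_LTA_sub (subsetIr f g) Lb2.
Qed.

Lemma lta_act_mul_cancel a a' b1 b2 :
    1 < #|f :\: h| -> 1 < #|g :\: h| ->
    in_LTA_g h a -> in_LTA_g h a' -> in_LTA_g f b1 -> in_LTA_g g b2 ->
    pmul (lta_act a h) (orbit_sum b1 b2) = pmul (lta_act a' h) (orbit_sum b1 b2) ->
  lta_act a h = lta_act a' h.
Proof.
move=> cf cg La La' Lb1 Lb2 E.
have {}E x : lta_sat a h x && peval (orbit_sum b1 b2) x =
             lta_sat a' h x && peval (orbit_sum b1 b2) x.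
  by have := congr1 (fun p => peval p x) E; rewrite !peval_mul !peval_lta_act.
have lin_eq := lta_lin_eq_on_support (fun i _ => lta_row_LTA_sub i (subxx h) La)
  (fun i _ => lta_row_LTA_sub i (subxx h) La') (peval_orbit_sum Lb1 Lb2) E.
have disj : [disjoint f :\: h & g :\: h].
  by rewrite -setI_eq0; apply/eqP/setP => j; rewrite !inE; case: (j \in f); case: (j \in g).
apply: peval_inj => x; rewrite !peval_lta_act; apply: eq_forallb_in => i ih.
congr (_ (+) _).
suff vanish y : aff (setSD (lta_row a i) (lta_row a' i)) (a.2 i (+) a'.2 i) y = false.
  by have := vanish x; rewrite aff_setSDl /lta_lin; case: (aff _ _ x); case: (aff _ _ x).
move: y; apply: (aff_vanish_on_sum _ _ disj cf cg) => [j _|j _|y sy].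
- exact: lta_row_LTA_sub (subsetDl _ _) Lb1.
- exact: lta_row_LTA_sub (subsetDl _ _) Lb2.
rewrite aff_setSDl; have := lin_eq i y ih; rewrite /lta_lin => -> //; first exact: addbb.
by rewrite peval_add !peval_lta_act.
Qed.

Lemma lta_orbit_mul_cancel a a' b1 b1' b2 b2' :
    1 < #|f :\: h| -> 1 < #|g :\: h| ->
    in_LTA_g h a -> in_LTA_g h a' -> in_LTA_g f b1 -> in_LTA_g f b1' ->
    in_LTA_g g b2 -> in_LTA_g g b2' ->
    pmul (lta_act a h) (orbit_sum b1 b2) = pmul (lta_act a' h) (orbit_sum b1' b2') ->
  lta_act a h = lta_act a' h /\ orbit_sum b1 b2 = orbit_sum b1' b2'.
Proof.
move=> cf cg La La' Lb1 Lb1' Lb2 Lb2' E.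
have {}E' x : lta_sat a h x && peval (orbit_sum b1 b2) x =
              lta_sat a' h x && peval (orbit_sum b1' b2') x.
  by have := congr1 (fun p => peval p x) E; rewrite !peval_mul !peval_lta_act.
have rows_h c : in_LTA_g h c -> {in h, forall i, lta_row c i \subset ~: h}.
  by move=> Lc i _; exact: lta_row_LTA_sub (subxx h) Lc.
have inv := peval_orbit_sum Lb1 Lb2; have inv' := peval_orbit_sum Lb1' Lb2'.
have same_sum : orbit_sum b1 b2 = orbit_sum b1' b2'.
  apply: peval_inj => x; apply/idP/idP.
    exact: (lta_sat_and_cancel (rows_h _ La) inv inv' E').
  by apply: (lta_sat_and_cancel (rows_h _ La') inv' inv) => y; rewrite -E'.
split=> //; rewrite -same_sum in E.
exact: lta_act_mul_cancel cf cg La La' Lb1 Lb2 E.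
Qed.

End OrbitProduct.

Theorem mainTheorem13 (m : nat) (I : {set mono m}) (f g : mono m) :
  decreasing I ->
  f \in I -> g \in I ->
  #|f| = \max_(u in I) #|u| ->
  #|g| = \max_(u in I) #|u| ->
  #|f :&: g| + 2 <= \max_(u in I) #|u| ->
  let h := f :&: g in
  let S := setadd (lta_orbit f (f :\: h)) (lta_orbit g (g :\: h)) in
  #|setmul (lta_orbit h h) S| = #|lta_orbit h h| * #|S|.
Proof.
(* Only the degree bound matters; I need not be decreasing. *)
move=> _ _ _ degf degg degh h S.
have cf : 1 < #|f :\: h| by rewrite cardsD setIA setIid; lia.
have cg : 1 < #|g :\: h| by rewrite cardsD setICA setIid; lia.
rewrite /setmul curry_imset2X card_in_imset ?cardsX //.
move=> [A s] [A' s'] /setXP[/imsetP[a La ->]].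
move=> /imset2P[p1 p2 /imsetP[b1 Lb1 ->] /imsetP[b2 Lb2 ->] ->].
move=> /setXP[/imsetP[a' La' ->]].
move=> /imset2P[p1' p2' /imsetP[b1' Lb1' ->] /imsetP[b2' Lb2' ->] ->] /= E.
rewrite !inE in La La' Lb1 Lb1' Lb2 Lb2'.
by case: (lta_orbit_mul_cancel cf cg La La' Lb1 Lb1' Lb2 Lb2' E); rewrite /orbit_sum => -> ->.
Qed.
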